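(* The set $\{[A]\in\mathrm{MALG}: \text{there is no } D\in\boldsymbol{\Delta}^0_2 \text{ with } \mu(A\,\triangle\, D)=0\}$ is comeager in $\mathrm{MALG}$.
   Context: $2^\omega$ is the Cantor space; $\mu$ is the coin-tossing measure ($\mu(N_s)=2^{-\mathrm{lh}(s)}$, $N_s=\{x:s\subset x\}$). $\mathrm{MALG}$ is the measure algebra: the set of equivalence classes $[A]$ of $\mu$-measurable subsets of $2^\omega$ under $A\equiv B\iff\mu(A\triangle B)=0$, endowed with the complete separable metric $\delta([A],[B])=\mu(A\triangle B)$, which makes it a Polish space. $\boldsymbol{\Delta}^0_2$ is the class of sets that are simultaneously $F_\sigma$ and $G_\delta$. *)

From HB Require Import structures.
From mathcomp Require Import all_boot all_order all_algebra.
From mathcomp Require Import all_classical all_reals all_analysis borel_hierarchy.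
Set Implicit Arguments. Unset Strict Implicit. Unset Printing Implicit Defensive.
Import Order.TTheory GRing.Theory Num.Theory.
Import numFieldNormedType.Exports.
Local Open Scope classical_set_scope.
Local Open Scope ring_scope.

Definition BorelCantor := g_sigma_algebraType (@open cantor_space).

Definition cylinder (s : seq bool) : set cantor_space :=
  [set x | forall i, (i < size s)%N -> x i = nth false s i].

Definition symdiff {T} (A B : set T) : set T := (A `\` B) `|` (B `\` A).

Definition Delta02 (D : set cantor_space) : Prop := Fsigma D /\ Gdelta D.

Section MALG.
Context {R : realType} (mu : {measure set BorelCantor -> \bar R}).

(** MALG is the metric identification of the pseudometric space of measurable
    sets with delta(A,B) = mu (A symdiff B); open / dense / comeager sets of MALG
    correspond to such sets of representatives, described here. *)
Definition malg_open (U : set (set BorelCantor)) : Prop :=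
  (forall A, U A -> measurable A) /\
  forall A, U A -> exists2 e : R, 0 < e &
     forall B, measurable B -> (mu (symdiff A B) < e%:E)%E -> U B.

Definition malg_dense (U : set (set BorelCantor)) : Prop :=
  forall A, measurable A -> forall e : R, 0 < e ->
     exists2 B, U B & (mu (symdiff A B) < e%:E)%E.

Definition malg_comeager (S : set (set BorelCantor)) : Prop :=
  exists2 F : nat -> set (set BorelCantor),
    (forall n, malg_open (F n) /\ malg_dense (F n)) &
    (forall A, measurable A -> (forall n, F n A) -> S A).
End MALG.

(** A set A splits the cylinder N_s when both A and its complement meet N_s in
    positive measure. For fixed s the splitting sets are open in MALG, since
    mu (A `&` N) moves by at most mu (symdiff A B), and dense, since filling one
    small subcylinder of N_s and emptying another changes A very little; hence
    the sets splitting every cylinder form a comeager set. None of them is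
    equivalent to a Delta^0_2 set D: the closed sets whose union is D, together
    with the complements of the open sets whose intersection is D, are countably
    many closed sets covering the Cantor space, so by the Baire category theorem
    one of them contains a cylinder N_s. Then N_s lies inside D or outside D, so
    a set equivalent to D cannot split N_s. *)

From HB Require Import structures.
From mathcomp Require Import all_boot all_order all_algebra.
From mathcomp Require Import all_classical all_reals all_analysis borel_hierarchy.
Set Implicit Arguments.
Unset Strict Implicit.
Unset Printing Implicit Defensive.
Import Order.TTheory GRing.Theory Num.Theory.
Import numFieldNormedType.Exports.
Local Open Scope classical_set_scope.
Local Open Scope ring_scope.

Lemma cylinder_rcons s b : cylinder (rcons s b) =
  cylinder s `&` (fun x : cantor_space => x (size s)) @^-1` [set b].
Proof.
apply/seteqP; split => x /=.
  move=> xsb; split => [i ilt|].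
    by rewrite xsb ?size_rcons ?nth_rcons ?ilt // ltnS ltnW.
  by move: (xsb (size s)); rewrite size_rcons nth_rcons ltnn eqxx ltnS => ->.
move=> [xs xb] i; rewrite size_rcons ltnS leq_eqVlt nth_rcons.
by case/orP => [/eqP->|ilt]; rewrite ?ltnn ?eqxx // ilt xs.
Qed.

Lemma open_cylinder s : open (cylinder s).
Proof.
elim/last_ind: s => [|s b IH].
  have -> : cylinder [::] = setT.
    by apply/seteqP; split => // x _ i.
  exact: openT.
rewrite cylinder_rcons; apply: openI => //; apply: open_comp.
  by move=> x _; exact: (@proj_continuous nat (fun _ => bool) (size s)).
exact: discrete_open.
Qed.

Lemma cylinder_mkseq (x : cantor_space) k :
  cylinder (mkseq x k) = [set y | forall i, (i < k)%N -> y i = x i].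
Proof.
apply/seteqP; split => y /= yx i; rewrite ?size_mkseq => ik.
  by rewrite yx ?size_mkseq ?nth_mkseq.
by rewrite nth_mkseq ?yx.
Qed.

Lemma cylinder_catl s u : cylinder (s ++ u) `<=` cylinder s.
Proof.
move=> x xsu i i_lt; rewrite xsu ?nth_cat ?i_lt // size_cat.
exact: leq_trans i_lt (leq_addr _ _).
Qed.

Lemma cylinder_cat_true_false s u v :
  cylinder (s ++ true :: u) `&` cylinder (s ++ false :: v) = set0.
Proof.
apply/seteqP; split => // x [xt xf].
have s_lt b w : (size s < size (s ++ b :: w))%N.
  by rewrite size_cat /= addnS ltnS leq_addr.
by move: (xt _ (s_lt _ _)) (xf _ (s_lt _ _)); rewrite !nth_cat ltnn subnn => ->.
Qed.

Lemma nbhs_cylinder_mkseq (x : cantor_space) (U : set cantor_space) :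
  nbhs x U -> exists k, cylinder (mkseq x k) `<=` U.
Proof.
move=> xU; apply: contrapT => /forallNP noU.
have escape k : exists y, cylinder (mkseq x k) y /\ ~ U y.
  by have /existsNP[y /not_implyP[xy Uy]] := noU k; exists y.
have [y yP] := choice escape.
have y_cvg : y @ \oo --> x.
  apply/cvg_sup => N V [W] [[Z] oZ <-] ZxN ZV.
  apply: (filterS ZV); rewrite nbhs_simpl; exists N.+1 => // k /= Nk.
  by move: (yP k).1; rewrite cylinder_mkseq => /(_ N Nk) ->.
have [N _ NU] := y_cvg U xU.
exact: (yP N).2 (NU N (leqnn N)).
Qed.

Lemma open_cylinder_refine (U : set cantor_space) s x :
  open U -> U x -> cylinder s x ->
  exists2 u : seq bool, u != [::] & cylinder (s ++ u) `<=` U.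
Proof.
move=> oU Ux sx.
have [k xkU] : exists k, cylinder (mkseq x k) `<=` U.
  by apply: nbhs_cylinder_mkseq; apply: open_nbhs_nbhs.
exists (mkseq (fun i => x (size s + i)%N) k.+1) => // y ysu.
apply: xkU; rewrite cylinder_mkseq => i ik.
have i_lt : (i < size (s ++ mkseq (fun j => x (size s + j)%N) k.+1))%N.
  by rewrite size_cat size_mkseq ltn_addl // ltnW.
rewrite (ysu i i_lt) nth_cat; case: ltnP => [i_s|s_i]; first by rewrite sx.
rewrite nth_mkseq /= ?subnKC //.
by rewrite ltnS (leq_trans (leq_subr _ _)) // ltnW.
Qed.

Lemma cantor_closed_cover_cylinder (C : nat -> set cantor_space) :
  (forall n, closed (C n)) -> (forall x, exists n, C n x) ->
  exists n s, cylinder s `<=` C n.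
Proof.
move=> cC cover; apply: contrapT => /forallNP noC.
have extend n s : exists u : seq bool, u != [::] /\ cylinder (s ++ u) `<=` ~` C n.
  have /existsNP[y /not_implyP[sy Cny]] : ~ cylinder s `<=` C n.
    by move=> sC; apply: (noC n); exists s.
  have [u u0 suC] := open_cylinder_refine (closed_openC (cC n)) Cny sy.
  by exists u.
have [f fP] := choice (fun ns : nat * seq bool => extend ns.1 ns.2).
pose t := fix t n := if n is m.+1 then t m ++ f (m, t m) else [::].
have t_size n : (n <= size (t n))%N.
  elim: n => //= n IH; rewrite size_cat -addn1 leq_add //.
  by rewrite lt0n size_eq0; case: (fP (n, t n)).
have t_prefix n m : (n <= m)%N -> prefix (t n) (t m).
  elim: m => [|m IH]; first by rewrite leqn0 => /eqP->; exact: prefix_refl.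
  rewrite leq_eqVlt => /orP[/eqP->|]; first exact: prefix_refl.
  rewrite ltnS => /IH.
  by move/prefix_trans; apply; exact: prefix_prefix.
have nth_t n m i : (n <= m)%N -> (i < size (t n))%N ->
    nth false (t m) i = nth false (t n) i.
  by move=> /t_prefix /prefixP[r ->] i_lt; rewrite nth_cat i_lt.
(* [t] is a chain of nested cylinders with [cylinder (t n.+1)] disjoint from
   [C n]; its limit point [z] then lies in no [C n]. *)
pose z : cantor_space := fun i => nth false (t i.+1) i.
have z_t n : cylinder (t n) z.
  move=> i i_lt; rewrite /z -(nth_t _ (maxn n i.+1) _ (leq_maxr _ _)) //.
  exact: nth_t (leq_maxl _ _) i_lt.
have [n Cnz] := cover z.
by have [_ /(_ z (z_t n.+1))] := fP (n, t n).
Qed.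

Lemma Delta02_cylinder_homogeneous (D : set cantor_space) : Delta02 D ->
  exists s, cylinder s `<=` D \/ cylinder s `<=` ~` D.
Proof.
move=> [[F cF DF] [G oG DG]].
pose C n := if odd n then ~` G n./2 else F n./2.
have cC n : closed (C n) by rewrite /C; case: odd; rewrite ?closedC.
have cover x : exists n, C n x.
  have [|nDx] := pselect (D x).
    by rewrite DF => -[i _ Fix]; exists i.*2; rewrite /C odd_double doubleK.
  have /existsNP[i Gix] : ~ forall i, G i x.
    by move=> Gx; apply: nDx; rewrite DG => i _; exact: Gx.
  by exists i.*2.+1; rewrite /C /= odd_double /= uphalf_double.
have [n [s sC]] := cantor_closed_cover_cylinder cC cover.
exists s; rewrite /C in sC; case: odd in sC; [right|left] => x /sC.
  by rewrite DG => Gx Dx; apply: Gx; exact: Dx.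
by rewrite DF; exists n./2.
Qed.

Lemma symdiffCC {T} (A B : set T) : symdiff (~` A) (~` B) = symdiff A B.
Proof. by rewrite /symdiff !setDE !setCK setUC (setIC (~` B)) (setIC (~` A)). Qed.

Lemma measurable_cylinder s : measurable (cylinder s : set BorelCantor).
Proof. by apply: sub_sigma_algebra; exact: open_cylinder. Qed.

Lemma measurable_Fsigma (D : set cantor_space) : Fsigma D ->
  measurable (D : set BorelCantor).
Proof.
move=> [F cF ->]; apply: bigcupT_measurable => i.
rewrite -[F i]setCK; apply: measurableC; apply: sub_sigma_algebra.
exact: closed_openC.
Qed.

Lemma gt0_exists_fin_le (R : realDomainType) (a : \bar R) :
  (0 < a)%E -> exists2 e : R, (0 < e)%R & (e%:E <= a)%E.
Proof. by case: a => [r r_gt0| |//]; [exists r|exists 1%R; rewrite ?leey]. Qed.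

Section splitting.
Local Open Scope ereal_scope.
Context d (T : measurableType d) (R : realType) (mu : {measure set T -> \bar R}).

Definition splitting (N : set T) : set (set T) :=
  [set A | measurable A /\ 0 < mu (A `&` N) /\ 0 < mu (N `\` A)].

Lemma measurable_symdiff (A B : set T) : measurable A -> measurable B ->
  measurable (symdiff A B).
Proof. by move=> mA mB; apply: measurableU; apply: measurableD. Qed.

Lemma measureI_le_symdiff (A B N : set T) :
  measurable A -> measurable B -> measurable N ->
  mu (A `&` N) <= mu (B `&` N) + mu (symdiff A B).
Proof.
move=> mA mB mN; have mBN := measurableI _ _ mB mN.
have mAB := measurable_symdiff mA mB.
have sub : A `&` N `<=` B `&` N `|` symdiff A B.
  by move=> x [Ax Nx]; have [Bx|nBx] := pselect (B x); [left|right; left].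
rewrite (le_trans _ (measureU2 mu mBN mAB)) // le_measure ?inE //.
all: by [apply: measurableU | apply: measurableI].
Qed.

Lemma symdiff_lt_measureI_gt0 (A B N : set T) (e : R) :
  measurable A -> measurable B -> measurable N ->
  e%:E <= mu (A `&` N) -> mu (symdiff A B) < e%:E -> 0 < mu (B `&` N).
Proof.
move=> mA mB mN eAN ABe; rewrite lt0e measure_ge0 andbT; apply/eqP => BN0.
have := measureI_le_symdiff mA mB mN; rewrite BN0 add0e => /le_lt_trans/(_ ABe).
by rewrite ltNge eAN.
Qed.

Lemma null_symdiff_not_splitting (A D N : set T) :
  measurable A -> measurable D -> measurable N -> mu (symdiff A D) = 0 ->
  N `<=` D \/ N `<=` ~` D -> ~ splitting N A.
Proof.
move=> mA mD mN AD0 [ND|NDc] [_ [AN NA]].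
  have NA0 : mu (N `\` A) = 0.
    apply: (subset_measure0 (measurableD mN mA) (measurable_symdiff mA mD)) AD0.
    by move=> x [Nx Ax]; right; split => //; exact: ND.
  by rewrite NA0 ltxx in NA.
have AN0 : mu (A `&` N) = 0.
  apply: (subset_measure0 (measurableI _ _ mA mN) (measurable_symdiff mA mD)) AD0.
  by move=> x [Ax Nx]; left; split => //; exact: NDc.
by rewrite AN0 ltxx in AN.
Qed.

End splitting.

Section malg_splitting.
Context (R : realType) (mu : {measure set BorelCantor -> \bar R}).
Local Open Scope ereal_scope.

Lemma malg_open_splitting (N : set BorelCantor) :
  measurable N -> malg_open mu (splitting mu N).
Proof.
move=> mN; split => [A []//|A [mA [AN NA]]].
have [e1 e1_gt0 e1AN] := gt0_exists_fin_le AN.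
have [e2 e2_gt0 e2NA] := gt0_exists_fin_le NA.
exists (Num.min e1 e2); first by rewrite lt_min e1_gt0.
move=> B mB ABe; split => //; split.
  apply: (symdiff_lt_measureI_gt0 mA mB mN _ ABe).
  by rewrite (le_trans _ e1AN) // lee_fin ge_min lexx.
rewrite setDE setIC.
apply: (symdiff_lt_measureI_gt0 (A := ~` A) (B := ~` B) (e := Num.min e1 e2)).
- exact: measurableC.
- exact: measurableC.
- exact: mN.
- by rewrite setIC -setDE (le_trans _ e2NA) // lee_fin ge_min lexx orbT.
- by rewrite symdiffCC.
Qed.

Lemma malg_dense_splitting_cylinder
  (hmu : forall s, mu (cylinder s) = ((2%:R : R) ^- size s)%:E) s :
  malg_dense mu (splitting mu (cylinder s)).
Proof.
move=> A mA e e_gt0.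
have [M _ MP] := near_infty_natSinv_expn_lt (PosNum (divr_gt0 e_gt0 (ltr0n R 2))).
pose t b := s ++ b :: nseq M false.
have mu_t b : mu (cylinder (t b)) = ((2%:R : R) ^- size (t b))%:E := hmu _.
have mu_t_gt0 b : 0 < mu (cylinder (t b)).
  by rewrite mu_t lte_fin invr_gt0 exprn_gt0.
have mu_t_lt b : mu (cylinder (t b)) < (e / 2)%:E.
  rewrite mu_t lte_fin -(mul1r (_ ^- _)); apply: MP.
  by rewrite /= /t size_cat /= size_nseq addnS ltnW // ltnS leq_addl.
(* [B] splits [cylinder s]: it contains [cylinder (t true)] and misses
   [cylinder (t false)], and it differs from [A] only on these two cylinders. *)
pose B := (A `|` cylinder (t true)) `\` cylinder (t false).
have mt b := measurable_cylinder (t b).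
have mB : measurable B by apply: measurableD => //; exact: measurableU.
exists B.
  split => //; split.
    apply: (lt_le_trans (mu_t_gt0 true)).
    rewrite le_measure ?inE //; last 2 first.
    - exact: measurableI (measurable_cylinder s).
    - move=> x xt; split; last exact: cylinder_catl xt.
      split; first by right.
      move=> xf; have /seteqP[tf0 _] :=
        cylinder_cat_true_false s (nseq M false) (nseq M false).
      exact: tf0 x (conj xt xf).
  apply: (lt_le_trans (mu_t_gt0 false)).
  rewrite le_measure ?inE //; last 2 first.
  - exact: measurableD (measurable_cylinder s) mB.
  - by move=> x xf; split; [exact: cylinder_catl xf|case].
have AB_t : symdiff A B `<=` cylinder (t true) `|` cylinder (t false).
  move=> x [[Ax nBx]|[[[Ax|xt] nxf] nAx]] //; last by left.
  have [xf|nxf] := pselect (cylinder (t false) x); first by right.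
  by exfalso; apply: nBx; split => //; left.
apply: (le_lt_trans (le_measure mu _ _ AB_t)); rewrite ?inE.
- exact: measurable_symdiff.
- exact: measurableU.
apply: (le_lt_trans (measureU2 _ (mt true) (mt false))).
by rewrite [e]splitr EFinD; apply: lteD; exact: mu_t_lt.
Qed.

End malg_splitting.

Theorem theorem1p6 (R : realType) (mu : {measure set BorelCantor -> \bar R})
  (hmu : forall s : seq bool, mu (cylinder s) = ((2%:R : R) ^- size s)%:E) :
  malg_comeager mu
    [set A : set BorelCantor | measurable A /\
       ~ (exists D : set cantor_space, Delta02 D /\ mu (symdiff A D) = 0%E)].
Proof.
pose F n := splitting mu (cylinder (odflt [::] (unpickle n))).
exists F => [n|A mA FA].
  split; last exact: malg_dense_splitting_cylinder.
  by apply: malg_open_splitting; exact: measurable_cylinder.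
split => // -[D [DD AD0]].
have [s sD] := Delta02_cylinder_homogeneous DD.
apply: (null_symdiff_not_splitting mA (measurable_Fsigma DD.1)
  (measurable_cylinder s) AD0 sD).
by have := FA (pickle s); rewrite /F pickleK.
Qed.
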